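(* Consider an $m$-player episodic Markov game with finite state space $\mathcal{S}$ ($|\mathcal{S}|=S$), action sets $\mathcal{A}_1,\dots,\mathcal{A}_m$ with $|\mathcal{A}_j|=A_j$, and horizon $H$, and an offline dataset of size $n$ in which, for each $h\in[H]$, the state–joint-action pairs $(s_h^k,\mathbf{a}_h^k)$, $k=1,\dots,n$, are i.i.d. with law $d_h$, all dataset tuples being mutually independent. Let $p_{\min}=\min_{s,\mathbf{a},h}\{d_h(s,\mathbf{a}):d_h(s,\mathbf{a})>0\}$ and $\delta\in(0,1)$. If $n\geq \frac{8\log(S\prod_{j\in[m]}A_jH/\delta)}{p_{\min}}$, then with probability at least $1-\delta$, for every joint strategy $\pi$ we have $2C(\pi)\geq \widehat{C}(\pi)$.
   Context: A (Markov) joint strategy is $\pi=(\pi_1,\dots,\pi_m)$ with $\pi_{h,j}:\mathcal{S}\to\Delta(\mathcal{A}_j)$; players act independently. From a fixed initial state $s_1$, $d_h^{\pi}(s,\mathbf{a})$ denotes the probability that $(s_h,\mathbf{a}_h)=(s,\mathbf{a})$ under $\pi$. For a strategy $\pi'$ and player $j$, $(\pi'_j,\pi_{-j})$ denotes the joint strategy where player $j$ uses $\pi'_j$ and all others use $\pi$. Let $n_h(s,\mathbf{a})$ be the number of $k$ with $(s_h^k,\mathbf{a}_h^k)=(s,\mathbf{a})$ and $\widehat{d}_h(s,\mathbf{a})=n_h(s,\mathbf{a})/n$. The population unilateral coefficient is $C(\pi)=\max_{h,j,\pi',s,\mathbf{a}} d_h^{\pi'_j,\pi_{-j}}(s,\mathbf{a})/d_h(s,\mathbf{a})$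 and the empirical unilateral coefficient is $\widehat{C}(\pi)=\max_{h,j,\pi',s,\mathbf{a}} d_h^{\pi'_j,\pi_{-j}}(s,\mathbf{a})/\widehat{d}_h(s,\mathbf{a})$ (maxima over $h\in[H]$, $j\in[m]$, all strategies $\pi'$, $s\in\mathcal{S}$, joint actions $\mathbf{a}$; with conventions $0/0=0$ and $x/0=+\infty$ for $x>0$). *)

From HB Require Import structures.
From mathcomp Require Import all_boot all_order all_algebra.
From mathcomp Require Import all_classical all_reals all_analysis.
Set Implicit Arguments. Unset Strict Implicit. Unset Printing Implicit Defensive.
Import Order.TTheory GRing.Theory Num.Theory.
Local Open Scope ring_scope.

Section MarkovGame.
Variables (R : realType) (S : finType) (m : nat) (A : 'I_m -> finType).

Definition jact := {dffun forall j : 'I_m, A j}.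

(* A Markov joint strategy: pi j h s a = pi_{h,j}(a | s), steps h = 0,1,... *)
Definition strategy := forall j : 'I_m, nat -> S -> A j -> R.

Definition valid_strategy (pi : strategy) : Prop :=
  forall (j : 'I_m) (h : nat) (s : S),
    (forall a, 0 <= pi j h s a) /\ \sum_(a : A j) pi j h s a = 1.

Definition valid_kernel (P : nat -> S -> jact -> S -> R) : Prop :=
  forall h s a, (forall s', 0 <= P h s a s') /\ \sum_(s' : S) P h s a s' = 1.

Definition jprob (pi : strategy) (h : nat) (s : S) (a : jact) : R :=
  \prod_(j : 'I_m) pi j h s (a j).

(* state marginal mu_h^pi starting from fixed s1 (step 0 is the first step) *)
Fixpoint state_occ (P : nat -> S -> jact -> S -> R) (s1 : S) (pi : strategy)
  (h : nat) : S -> R :=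
  match h with
  | 0 => fun s => if s == s1 then 1 else 0
  | h'.+1 => fun s' => \sum_(s : S) \sum_(a : jact)
      state_occ P s1 pi h' s * jprob pi h' s a * P h' s a s'
  end.

Definition occ P s1 (pi : strategy) (h : nat) (s : S) (a : jact) : R :=
  state_occ P s1 pi h s * jprob pi h s a.

Definition deviate (pi pi' : strategy) (j : 'I_m) : strategy :=
  fun k => if k == j then pi' k else pi k.

Definition eratio (x y : R) : \bar R :=
  if 0 < y then (x / y)%:E else if x == 0 then 0%E else +oo%E.

Definition unilateral_coef (H : nat) P s1 (dd : 'I_H -> S -> jact -> R)
  (pi : strategy) : \bar R :=
  ereal_sup [set r | exists (h : 'I_H) (j : 'I_m) (pi' : strategy) (s : S) (a : jact),
      valid_strategy pi' /\ r = eratio (occ P s1 (deviate pi pi' j) h s a) (dd h s a)].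

Definition popC (H : nat) P s1 (d : 'I_H -> S -> jact -> R) (pi : strategy) :=
  unilateral_coef P s1 d pi.

(* offline dataset: D (h, k) = (s_h^k, a_h^k) *)
Definition dataset (H n : nat) := {ffun 'I_H * 'I_n -> S * jact}.

Definition count_sa (H n : nat) (D : dataset H n) (h : 'I_H) (s : S) (a : jact) : nat :=
  #|[set k : 'I_n | D (h, k) == (s, a)]|.

Definition dhat (H n : nat) (D : dataset H n) (h : 'I_H) (s : S) (a : jact) : R :=
  (count_sa D h s a)%:R / n%:R.

Definition empC (H n : nat) P s1 (D : dataset H n) (pi : strategy) :=
  unilateral_coef P s1 (dhat D) pi.

(* probability of the dataset D: all tuples independent, (s_h^k,a_h^k) ~ d_h *)
Definition data_weight (H n : nat) (d : 'I_H -> S -> jact -> R) (D : dataset H n) : R :=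
  \prod_(hk : 'I_H * 'I_n) d hk.1 (D hk).1 (D hk).2.

Definition data_prob (H n : nat) (d : 'I_H -> S -> jact -> R)
  (E : dataset H n -> Prop) : R :=
  \sum_(D : dataset H n | `[< E D >]) data_weight d D.

(* p_min = min { d_h(s,a) : d_h(s,a) > 0 } (all values are <= 1, so 1 is a
   neutral default for the nonempty minimum) *)
Definition pmin (H : nat) (d : 'I_H -> S -> jact -> R) : R :=
  \big[Num.min/1]_(h : 'I_H) \big[Num.min/1]_(s : S)
     \big[Num.min/1]_(a : jact | 0 < d h s a) d h s a.

Definition valid_data_dist (H : nat) (d : 'I_H -> S -> jact -> R) : Prop :=
  forall h, (forall s a, 0 <= d h s a) /\ \sum_(s : S) \sum_(a : jact) d h s a = 1.

End MarkovGame.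

From HB Require Import structures.
From mathcomp Require Import all_boot all_order all_algebra.
From mathcomp Require Import all_classical all_reals all_analysis.
From mathcomp Require Import ring lra.
Import Order.TTheory GRing.Theory Num.Theory.
Local Open Scope ring_scope.

(* For fixed (h, s, a), the count n_h(s, a) is binomial with parameter
   p = d_h(s, a), and the exponential moment E[exp(-n_h(s, a) / 2)] =
   (1 + p (e^(-1/2) - 1))^n gives the multiplicative Chernoff bound
   P(n_h(s, a) < n p / 2) <= exp(-n p / 8) <= exp(-n p_min / 8) when p > 0.
   A union bound over the S * prod_j A_j * H triples and the sample size
   assumption make all these events fail with probability >= 1 - delta.
   Outside them dhat_h >= d_h / 2, and on datasets of positive probability
   d_h(s, a) = 0 forces dhat_h(s, a) = 0, so every ratio in the supremum
   defining C-hat(pi) is at most twice the corresponding ratio for C(pi). *)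

Lemma prod_if_fst_eq {R : comPzSemiRingType} {I J : finType} (i0 : I) (F : J -> R) :
  \prod_(ij : I * J) (if ij.1 == i0 then F ij.2 else 1) = \prod_j F j.
Proof.
rewrite -(pair_bigA _ (fun i j => if i == i0 then F j else 1)) /=.
rewrite (bigD1 i0) //= eqxx [X in _ * X]big1 ?mulr1 // => i /negbTE ->.
exact: big1.
Qed.

Lemma sum_mul_if_eq {R : comPzRingType} {T : finType} (f : T -> R) (x0 : T) (q : R) :
  \sum_x f x * (if x == x0 then q else 1) = \sum_x f x + f x0 * (q - 1).
Proof.
rewrite (bigD1 x0) //= eqxx [in RHS](bigD1 x0) //=.
rewrite (eq_bigr f) => [|x /negbTE ->]; [ring | exact: mulr1].
Qed.

Lemma expR_Nhalf_le (R : realType) : expR (- (1 / 2)) <= 5 / 8 :> R.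
Proof.
have e8 : 1 + 1 / 8 <= expR (1 / 8) :> R by apply: expR_ge1Dx.
have e2 : (1 + 1 / 8) ^+ 4 <= expR (1 / 2) :> R.
  have -> : 1 / 2 = 4%:R * (1 / 8) :> R by lra.
  by rewrite expRM_natl; apply: lerXn2r; rewrite ?nnegrE ?expR_ge0 //; lra.
rewrite expRN invf_ple ?posrE ?expR_gt0 //; apply: le_trans e2.
rewrite !exprS expr0; lra.
Qed.

Lemma eratio_le_twice {R : realType} {x y y' : R} :
  0 <= x -> 0 <= y -> (0 < y -> y / 2 <= y') -> (y = 0 -> y' = 0) ->
  (eratio x y' <= 2%:E * eratio x y)%E.
Proof.
move=> x_ge0 y_ge0 y'_ge y'_eq0; rewrite /eratio.
case: (ltP 0 y) => [y_gt0 | y_le0].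
  have y'_gt0 : 0 < y' by apply: lt_le_trans (y'_ge y_gt0); lra.
  rewrite y'_gt0 -EFinM lee_fin.
  have -> : 2 * (x / y) = x / (y / 2) by field; lra.
  by apply: ler_wpM2l => //; rewrite lef_pV2 ?posrE //; [apply: y'_ge | lra].
have y0 : y = 0 by apply/eqP; rewrite eq_le y_le0 y_ge0.
rewrite y'_eq0 // ltxx; case: (x == 0); first by rewrite mule0.
by rewrite gt0_muley // lte_fin.
Qed.

Lemma card_jact m (A : 'I_m -> finType) : #|jact A| = (\prod_(j : 'I_m) #|A j|)%N.
Proof. by rewrite /jact card_dep_ffun foldrE big_map big_enum. Qed.

Section Coefficients.
Context {R : realType} {S : finType} {m : nat} {A : 'I_m -> finType}.
Variables (P : nat -> S -> jact A -> S -> R) (s1 : S).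
Hypothesis vP : valid_kernel P.

Lemma state_occ_ge0 (pi : strategy R S A) h s :
  valid_strategy pi -> 0 <= state_occ P s1 pi h s.
Proof.
move=> vpi; elim: h s => [|h IH] s /=; first by case: ifP.
apply: sumr_ge0 => s0 _; apply: sumr_ge0 => a _.
rewrite mulr_ge0 ?(vP _ _ _).1 // mulr_ge0 //.
by apply: prodr_ge0 => j _; apply: (vpi _ _ _).1.
Qed.

Lemma occ_ge0 (pi : strategy R S A) h s a :
  valid_strategy pi -> 0 <= occ P s1 pi h s a.
Proof.
move=> vpi; rewrite mulr_ge0 ?state_occ_ge0 //.
by apply: prodr_ge0 => j _; apply: (vpi _ _ _).1.
Qed.

Lemma valid_deviate (pi pi' : strategy R S A) j :
  valid_strategy pi -> valid_strategy pi' -> valid_strategy (deviate pi pi' j).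
Proof. by move=> vpi vpi' k h s; rewrite /deviate; case: (k == j). Qed.

Lemma unilateral_coef_le_twice H (dd dd' : 'I_H -> S -> jact A -> R)
    (pi : strategy R S A) :
  valid_strategy pi -> (forall h s a, 0 <= dd h s a) ->
  (forall h s a, 0 < dd h s a -> dd h s a / 2 <= dd' h s a) ->
  (forall h s a, dd h s a = 0 -> dd' h s a = 0) ->
  (unilateral_coef P s1 dd' pi <= 2%:E * unilateral_coef P s1 dd pi)%E.
Proof.
move=> vpi dd_ge0 dd'_ge dd'_eq0.
apply: ge_ereal_sup => _ [h [j [pi' [s [a [vpi' ->]]]]]].
have occ_ge : 0 <= occ P s1 (deviate pi pi' j) h s a by apply/occ_ge0/valid_deviate.
apply: le_trans (eratio_le_twice occ_ge (dd_ge0 h s a) (dd'_ge h s a) (dd'_eq0 h s a)) _.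
rewrite lee_wpmul2l ?lee_fin //; apply: ereal_sup_ubound.
by exists h, j, pi', s, a.
Qed.

End Coefficients.

Section Dataset.
Context {R : realType} {S : finType} {m : nat} {A : 'I_m -> finType} {H n : nat}.
Context {d : 'I_H -> S -> jact A -> R}.

Local Notation dataset := (dataset S A H n).

Lemma pmin_gt0 : 0 < pmin d.
Proof.
have min_gt0 (x y : R) : 0 < x -> 0 < y -> 0 < Num.min x y by rewrite lt_min => -> ->.
apply: (big_ind (fun x => 0 < x)) => // h _.
apply: (big_ind (fun x => 0 < x)) => // s _.
exact: (big_ind (fun x => 0 < x)).
Qed.

Lemma pmin_le h s a : 0 < d h s a -> pmin d <= d h s a.
Proof.
move=> d_gt0; apply: le_trans (bigmin_le _ h _) _.
apply: le_trans (bigmin_le _ s _) _.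
exact: bigmin_le_cond.
Qed.

Lemma sum_data_weight_prod (g : 'I_H * 'I_n -> S * jact A -> R) :
  \sum_(D : dataset) data_weight d D * \prod_hk g hk (D hk)
  = \prod_hk \sum_(x : S * jact A) d hk.1 x.1 x.2 * g hk x.
Proof.
rewrite (bigA_distr_bigA (fun hk (x : S * jact A) => d hk.1 x.1 x.2 * g hk x)).
by apply: eq_bigr => D _; rewrite /data_weight -big_split.
Qed.

Hypothesis vd : valid_data_dist d.

Lemma sum_data_dist h : \sum_(x : S * jact A) d h x.1 x.2 = 1.
Proof. by rewrite -(pair_bigA _ (d h)); exact: (vd h).2. Qed.

Lemma data_dist_le1 h s a : d h s a <= 1.
Proof.
rewrite -(sum_data_dist h) (bigD1 (s, a)) //= lerDl.
by apply: sumr_ge0 => x _; apply: (vd h).1.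
Qed.

Lemma data_weight_ge0 (D : dataset) : 0 <= data_weight d D.
Proof. by apply: prodr_ge0 => hk _; apply: (vd _).1. Qed.

Lemma sum_data_weight : \sum_(D : dataset) data_weight d D = 1.
Proof.
transitivity (\prod_(hk : 'I_H * 'I_n) \sum_(x : S * jact A) d hk.1 x.1 x.2 * 1).
  by rewrite -sum_data_weight_prod; apply: eq_bigr => D _; rewrite big1 ?mulr1.
by rewrite big1 // => hk _; under eq_bigr do rewrite mulr1; exact: sum_data_dist.
Qed.

Lemma le_data_prob {E F : dataset -> Prop} :
  (forall D, E D -> F D) -> data_prob d E <= data_prob d F.
Proof.
move=> EF; rewrite /data_prob [leLHS]big_mkcond [leRHS]big_mkcond.
apply: ler_sum => D _.
case: asboolP => [/EF /asboolP -> // | _]; case: ifP => _ //.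
exact: data_weight_ge0.
Qed.

Lemma data_prob_le1 (E : dataset -> Prop) : data_prob d E <= 1.
Proof.
rewrite -sum_data_weight /data_prob big_mkcond; apply: ler_sum => D _.
by case: ifP => _ //; apply: data_weight_ge0.
Qed.

Lemma data_prob_union_bound {T : finType} {B : T -> dataset -> Prop}
    {E : dataset -> Prop} :
  (forall D, data_weight d D != 0 -> (forall t, ~ B t D) -> E D) ->
  1 - \sum_t data_prob d (B t) <= data_prob d E.
Proof.
move=> good; rewrite -sum_data_weight /data_prob.
under [X in _ - X]eq_bigr do rewrite big_mkcond.
rewrite exchange_big /= -sumrB [leRHS]big_mkcond; apply: ler_sum => D _.
set W := data_weight d D.
have bad_ge0 : 0 <= \sum_t (if `[< B t D >] then W else 0).
  by apply: sumr_ge0 => t _; case: ifP => _ //; apply: data_weight_ge0.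
case: asboolP => [_ | notE]; first by rewrite gerBl.
have [W0 | W_neq0] := eqVneq W 0; first by rewrite [X in X - _]W0 sub0r oppr_le0.
have [t Bt] : exists t, B t D.
  by apply/not_existsP => noB; apply: notE; apply: good.
rewrite (bigD1 t) //= asboolT // subr_le0 lerDl.
by apply: sumr_ge0 => i _; case: ifP => _ //; apply: data_weight_ge0.
Qed.

Lemma sum_data_weight_expn_count h s a (q : R) :
  \sum_(D : dataset) data_weight d D * q ^+ count_sa D h s a
  = (1 + d h s a * (q - 1)) ^+ n.
Proof.
pose g (hk : 'I_H * 'I_n) (x : S * jact A) :=
  if hk.1 == h then (if x == (s, a) then q else 1) else 1.
have count_prod D : q ^+ count_sa D h s a = \prod_hk g hk (D hk).
  pose F k := if D (h, k) == (s, a) then q else 1.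
  transitivity (\prod_(k : 'I_n) F k).
    by rewrite -big_mkcond prodr_const /count_sa cardsE.
  rewrite -(prod_if_fst_eq h F); apply: eq_bigr => -[i k] _.
  by rewrite /g /F /=; case: eqP => // ->.
under eq_bigr do rewrite count_prod.
rewrite sum_data_weight_prod.
transitivity (\prod_(hk : 'I_H * 'I_n) (if hk.1 == h then 1 + d h s a * (q - 1) else 1));
  last by rewrite (prod_if_fst_eq h (fun=> _)) prodr_const card_ord.
apply: eq_bigr => -[i k] _; rewrite /g /=; case: eqP => [-> | _].
  by rewrite sum_mul_if_eq sum_data_dist.
by under eq_bigr do rewrite mulr1; exact: sum_data_dist.
Qed.

Lemma count_sa_lower_tail h s a :
  data_prob d (fun D : dataset => (count_sa D h s a)%:R < n%:R * d h s a / 2)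
  <= expR (- (n%:R * d h s a) / 8).
Proof.
set p := d h s a; set q : R := expR (- (1 / 2)).
have p_ge0 : 0 <= p by apply: (vd h).1.
have p_le1 : p <= 1 by apply: data_dist_le1.
have q_ge0 : 0 <= q by apply: expR_ge0.
have markov (D : dataset) :
    (if `[< (count_sa D h s a)%:R < n%:R * p / 2 >] then data_weight d D else 0)
    <= expR (n%:R * p / 4) * (data_weight d D * q ^+ count_sa D h s a).
  rewrite mulrCA; have W_ge0 := data_weight_ge0 D.
  case: asboolP => [lt_count | _]; last first.
    by rewrite mulr_ge0 // mulr_ge0 ?expR_ge0 // exprn_ge0.
  rewrite -[leLHS]mulr1 ler_wpM2l // /q -expRM_natl -expRD.
  by apply: le_trans (expR_ge1Dx _); rewrite lerDl; lra.
rewrite /data_prob big_mkcond; apply: le_trans (ler_sum _ (fun D _ => markov D)) _.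
rewrite -mulr_sumr sum_data_weight_expn_count -/p.
have r_ge0 : 0 <= 1 + p * (q - 1) by have := mulr_ge0 p_ge0 q_ge0; lra.
have r_le : (1 + p * (q - 1)) ^+ n <= expR (n%:R * (p * (q - 1))).
  by rewrite expRM_natl; apply: lerXn2r; rewrite ?nnegrE ?expR_ge0 ?expR_ge1Dx.
apply: le_trans (ler_wpM2l (expR_ge0 _) r_le) _.
rewrite -expRD ler_expR.
have np_ge0 : 0 <= n%:R * p by apply: mulr_ge0.
(* the exponent n p / 4 + n p (q - 1) is at most -n p / 8 exactly when q <= 5/8 *)
have : n%:R * p * (q - 5 / 8) <= 0 by rewrite mulr_ge0_le0 // subr_le0 expR_Nhalf_le.
lra.
Qed.

Lemma dhat_lower_tail h s a :
  data_prob d (fun D : dataset => dhat R D h s a < d h s a / 2)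
  <= expR (- (n%:R * pmin d) / 8).
Proof.
have [n0 | n_gt0] := posnP n.
  by rewrite [in n%:R]n0 mul0r oppr0 mul0r expR0 data_prob_le1.
case: (ltP 0 (d h s a)) => [p_gt0 | p_le0]; last first.
  rewrite /data_prob big_pred0 ?expR_ge0 // => D; apply/asboolF.
  apply/negP; rewrite -leNgt (@le_trans _ _ 0) ?divr_ge0 //; lra.
have count_lt (D : dataset) : dhat R D h s a < d h s a / 2 ->
    (count_sa D h s a)%:R < n%:R * d h s a / 2.
  by rewrite /dhat ltr_pdivrMr ?ltr0n // mulrAC [_ * n%:R]mulrC.
apply: le_trans (le_data_prob count_lt) (le_trans (count_sa_lower_tail h s a) _).
rewrite ler_expR; have := ler_wpM2l (ler0n R n) (pmin_le h s a p_gt0); lra.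
Qed.

Lemma count_sa_eq0 (D : dataset) h s a :
  data_weight d D != 0 -> d h s a = 0 -> count_sa D h s a = 0%N.
Proof.
move=> W_neq0 p0; apply: eq_card0 => k; rewrite !inE; apply/negP => /eqP Dk.
by move: W_neq0; rewrite /data_weight (bigD1 (h, k)) //= Dk p0 mul0r eqxx.
Qed.

Lemma empC_le_twice_popC P s1 (D : dataset) (pi : strategy R S A) :
  valid_kernel P -> valid_strategy pi -> data_weight d D != 0 ->
  (forall h s a, d h s a / 2 <= dhat R D h s a) ->
  (empC P s1 D pi <= 2%:E * popC P s1 d pi)%E.
Proof.
move=> vP vpi W_neq0 dhat_ge; apply: unilateral_coef_le_twice => // h s a.
- exact: (vd h).1.
- by move=> p0; rewrite /dhat count_sa_eq0 ?mul0r.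
Qed.

End Dataset.

Lemma sample_size_tail {R : realType} {N : nat} {delta p x : R} :
  0 < delta -> 0 < p -> 8 * ln (N%:R / delta) / p <= x ->
  N%:R * expR (- (x * p) / 8) <= delta.
Proof.
move=> delta_gt0 p_gt0 x_ge.
have [-> | N_neq0] := eqVneq N 0%N; first by rewrite mul0r ltW.
have N_delta_gt0 : 0 < N%:R / delta by rewrite divr_gt0 // ltr0n lt0n.
have : N%:R / delta <= expR (x * p / 8).
  rewrite -[leLHS](lnK N_delta_gt0) ler_expR.
  by move: x_ge; rewrite ler_pdivrMr //; lra.
by rewrite ler_pdivrMr // mulNr expRN ler_pdivrMr ?expR_gt0 // mulrC.
Qed.

Theorem proposition1 (R : realType) (S : finType) (m : nat) (A : 'I_m -> finType)
  (H n : nat) (P : nat -> S -> jact A -> S -> R) (s1 : S)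
  (d : 'I_H -> S -> jact A -> R) (delta : R) :
  valid_kernel P ->
  valid_data_dist d ->
  0 < delta < 1 ->
  8 * ln ((#|S| * (\prod_(j : 'I_m) #|A j|) * H)%:R / delta) / pmin d <= n%:R ->
  1 - delta <= data_prob d (fun D : dataset S A H n =>
    forall pi : strategy R S A, valid_strategy pi ->
      (empC P s1 D pi <= 2%:E * popC P s1 d pi)%E).
Proof.
move=> vP vd /andP[delta_gt0 _] n_large.
pose bad (t : 'I_H * (S * jact A)) (D : dataset S A H n) :=
  dhat R D t.1 t.2.1 t.2.2 < d t.1 t.2.1 t.2.2 / 2.
apply: le_trans (data_prob_union_bound vd (B := bad) _); last first.
  move=> D W_neq0 good pi vpi; apply: empC_le_twice_popC => // h s a.
  by rewrite leNgt; apply/negP => /(good (h, (s, a))).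
rewrite lerD2l lerN2.
apply: le_trans (sample_size_tail delta_gt0 pmin_gt0 n_large).
apply: le_trans (ler_sum _ (fun t _ => dhat_lower_tail vd t.1 t.2.1 t.2.2)) _.
by rewrite sumr_const [leRHS]mulr_natl !card_prod card_ord card_jact [(H * _)%N]mulnC.
Qed.
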